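(* Let $I=(u..v)$ and $J=(c..d)$ be two conserved intervals of $\mathcal{P}$ with $u<c\leq v<d$. Then $(u..c)$, $(c..v)$, $(v..d)$ and $(u..d)$ are conserved intervals of $\mathcal{P}$.
   Context: Let $n\geq 2$ and let $\mathcal{P}=\{P_1,\ldots,P_K\}$ be signed permutations of $\{1,\ldots,n\}$: each $P_k$ is an ordering of $1,\ldots,n$ in which each element carries a sign $+$ or $-$. Assume $P_1=(+1,+2,\ldots,+n)$ and that every $P_k$ has first element $+1$ and last element $+n$. For integers $i\leq j$ write $(i..j)=\{i,\ldots,j\}$. A conserved interval of $\mathcal{P}$ is either a singleton, or a set $(a..c)$ with $a<c$ which (ignoring signs) occupies consecutive positions in every $P_k$ and which, in every $P_k$, has either $+a$ at its left end and $+c$ at its right end, or $-c$ at its left end and $-a$ at its right end. *)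

From mathcomp Require Import all_boot.
Set Implicit Arguments. Unset Strict Implicit. Unset Printing Implicit Defensive.

(* A signed element: (x, true) is +x, (x, false) is -x. *)
Definition selt := (nat * bool)%type.
Definition sperm := seq selt.

Definition is_signed_perm (n : nat) (P : sperm) : Prop :=
  perm_eq (map fst P) (iota 1 n).

Definition id_sperm (n : nat) : sperm := [seq (i, true) | i <- iota 1 n].

Definition conserved_in (P : sperm) (a c : nat) : Prop :=
  exists i : nat,
    let w := take (c - a + 1) (drop i P) in
    perm_eq (map fst w) (iota a (c - a + 1)) /\
    ((nth (0, true) w 0 = (a, true) /\ nth (0, true) w (c - a) = (c, true)) \/
     (nth (0, true) w 0 = (c, false) /\ nth (0, true) w (c - a) = (a, false))).

Definition conserved (n : nat) (Ps : seq sperm) (a c : nat) : Prop :=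
  (a = c /\ 1 <= a <= n) \/
  (a < c /\ forall P, P \in Ps -> conserved_in P a c).

From mathcomp Require Import all_boot.
From mathcomp Require Import zify.
Set Implicit Arguments. Unset Strict Implicit.

(* Work with the positions of the values: I occupies positions p..r with
   r = p + (v - u), and J occupies q..q + (d - c).  The value v lies in both
   blocks, which pins J to start inside I and forces J to carry the same
   orientation as I.  Counting the injectively placed values on p..q and on
   q..r gives q - p <= c - u and r - q <= v - c; as the two sums agree, both
   are equalities, and the four blocks (u..c), (c..v), (v..d), (u..d) can be
   read off at positions p, q, r, p.  A reversed I is handled by reading
   every permutation backwards with all signs flipped. *)

Definition window (s : seq nat) (i a c : nat) : Prop :=
  i + (c - a) < size s /\ forall j, i <= j <= i + (c - a) -> a <= nth 0 s j <= c.

Section Windows.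

Variable s : seq nat.
Hypothesis s_uniq : uniq s.

Lemma nth_inj j k : j < size s -> k < size s -> nth 0 s j = nth 0 s k -> j = k.
Proof. by move=> hj hk /eqP; rewrite nth_uniq // => /eqP. Qed.

Lemma uniq_nth_iota i m : i + m < size s -> uniq (map (nth 0 s) (iota i m.+1)).
Proof.
move=> hs; rewrite map_inj_in_uniq ?iota_uniq // => j k; rewrite !mem_iota => hj hk.
by apply: nth_inj; lia.
Qed.

Lemma window_size_le i m a m' :
  i + m < size s -> (forall j, i <= j <= i + m -> a <= nth 0 s j <= a + m') ->
  m <= m'.
Proof.
move=> hs hval.
have S : {subset map (nth 0 s) (iota i m.+1) <= iota a m'.+1}.
  move=> x /mapP[j]; rewrite !mem_iota => hj ->; have := hval j; lia.
by have := uniq_leq_size (uniq_nth_iota hs) S; rewrite size_map !size_iota.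
Qed.

Lemma window_cover i a c x : a <= c -> window s i a c -> a <= x <= c ->
  exists2 j, i <= j <= i + (c - a) & nth 0 s j = x.
Proof.
move=> ac [hs hval] hx; set w := map (nth 0 s) (iota i (c - a).+1).
have S : {subset w <= iota a (c - a).+1}.
  move=> y /mapP[j]; rewrite !mem_iota => hj ->; have := hval j; lia.
have [_ Ew] := uniq_min_size (uniq_nth_iota hs) S (ltac:(by rewrite size_map !size_iota)).
have : x \in w by rewrite Ew mem_iota; lia.
by case/mapP=> j; rewrite mem_iota => hj ->; exists j => //; lia.
Qed.

(* The window already contains every value of a..c, so by injectivity these
   values occur nowhere else. *)
Lemma window_pos i a c j : a <= c -> window s i a c -> j < size s ->
  a <= nth 0 s j <= c -> i <= j <= i + (c - a).
Proof.
move=> ac W hj hval; have [k hk Ek] := window_cover ac W hval.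
have -> // : j = k; apply: nth_inj => //; case: W; lia.
Qed.

Section Overlap.

Variables u v c d p q : nat.
Hypotheses (uc : u < c) (cv : c <= v) (vd : v < d).
Hypotheses (WI : window s p u v) (WJ : window s q c d).
Hypothesis sr : nth 0 s (p + (v - u)) = v.

Local Notation r := (p + (v - u)).

Lemma overlap_r_in_J : q <= r <= q + (d - c).
Proof. by apply: window_pos WJ _ _; [lia | case: WI; lia | rewrite sr; lia]. Qed.

Lemma overlap_start_le (sp : nth 0 s p = u) : nth 0 s q <= v.
Proof.
have [hsI hI] := WI; have [_ hJ] := WJ; have hr := overlap_r_in_J.
have pq : p <= q.
  rewrite leqNgt; apply/negP => qp.
  by have := hJ p; rewrite sp in hr *; lia.
by have := hI q; lia.
Qed.

Hypothesis sq : nth 0 s q = c.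

Lemma overlap_q_in_I : p <= q <= r.
Proof. by apply: window_pos WI _ _; [lia | case: WJ; lia | rewrite sq; lia]. Qed.

Lemma overlap_left_val j : p <= j <= q -> u <= nth 0 s j <= c.
Proof.
move=> hj; have [hsI hI] := WI; have hq := overlap_q_in_I.
have := hI j ltac:(lia); case: (ltnP (nth 0 s j) c) => hc hval; first lia.
have : q <= j <= q + (d - c).
  by apply: window_pos WJ _ _; [lia | case: WJ; lia | have := hI j; lia].
by move=> hjq; rewrite (_ : j = q) ?sq; lia.
Qed.

Lemma overlap_mid_val j : q <= j <= r -> c <= nth 0 s j <= v.
Proof.
move=> hj; have hq := overlap_q_in_I; have hr := overlap_r_in_J.
have [_ hI] := WI; have [_ hJ] := WJ.
by have := hI j; have := hJ j; lia.
Qed.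

Lemma overlap_shift : q = p + (c - u).
Proof.
have hq := overlap_q_in_I; have hs := WI.1.
have hl : q - p <= c - u.
  apply: (@window_size_le p (q - p) u); first lia.
  by move=> j hj; have := @overlap_left_val j; lia.
have hm : r - q <= v - c.
  apply: (@window_size_le q (r - q) c); first lia.
  by move=> j hj; have := @overlap_mid_val j; lia.
lia.
Qed.

Lemma overlap_right_val j : r <= j <= q + (d - c) -> v <= nth 0 s j <= d.
Proof.
move=> hj; have hr := overlap_r_in_J; have [hsJ hJ] := WJ.
have := hJ j ltac:(lia); case: (ltnP (nth 0 s j) v) => hv hval; last lia.
have : p <= j <= r by apply: window_pos WI _ _; lia.
by move=> hjr; move: hv; rewrite (_ : j = r) ?sr; lia.
Qed.

Lemma overlap_windows :
  [/\ window s p u c, window s q c v, window s r v d & window s p u d].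
Proof.
have e := overlap_shift; have hr := overlap_r_in_J; have [hsJ hJ] := WJ.
split; split; try lia; move=> j hj.
- by apply: overlap_left_val; lia.
- by apply: overlap_mid_val; lia.
- by apply: overlap_right_val; lia.
- case: (leqP j r) => hjr; last by have := hJ j; lia.
  have [_ hI] := WI; have := hI j; lia.
Qed.

End Overlap.

End Windows.

Lemma window_rev s i a c :
  window s i a c -> window (rev s) (size s - (i + (c - a)).+1) a c.
Proof.
rewrite /window size_rev => -[hs hval]; split; first lia.
move=> j hj; rewrite nth_rev ?size_rev; last lia.
have := hval (size s - j.+1); lia.
Qed.

Lemma perm_eq_window (s : seq nat) i a c : uniq s -> a <= c ->
  perm_eq (take (c - a).+1 (drop i s)) (iota a (c - a).+1) <-> window s i a c.
Proof.
move=> U ac; set w := take _ _.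
have nth_w k : k <= c - a -> nth 0 w k = nth 0 s (i + k).
  by move=> hk; rewrite nth_take ?nth_drop.
split=> [Pw | [hs hval]].
- have sw : size w = (c - a).+1 by rewrite (perm_size Pw) size_iota.
  split=> [|j hj]; first by move: sw; rewrite /w size_take_min size_drop; lia.
  have hk : j - i < size w by lia.
  have := mem_nth 0 hk; rewrite (perm_mem Pw) mem_iota nth_w; last lia.
  by rewrite subnKC; lia.
- have Uw : uniq w by rewrite take_uniq ?drop_uniq.
  have sw : size w = (c - a).+1 by rewrite /w size_take_min size_drop; lia.
  have S : {subset w <= iota a (c - a).+1}.
    move=> x /(nthP 0)[k]; rewrite sw => hk <-; rewrite nth_w ?mem_iota; last lia.
    have := hval (i + k); lia.
  have [_ E] := uniq_min_size Uw S (ltac:(by rewrite sw size_iota)).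
  by apply: uniq_perm; rewrite ?iota_uniq.
Qed.

Definition plus_block (P : sperm) i a c :=
  window (map fst P) i a c /\
  nth (0, true) P i = (a, true) /\ nth (0, true) P (i + (c - a)) = (c, true).

Definition minus_block (P : sperm) i a c :=
  window (map fst P) i a c /\
  nth (0, true) P i = (c, false) /\ nth (0, true) P (i + (c - a)) = (a, false).

Definition block (P : sperm) a c := exists i, plus_block P i a c \/ minus_block P i a c.

Lemma conserved_in_block P a c : uniq (map fst P) -> a <= c ->
  conserved_in P a c <-> block P a c.
Proof.
move=> U ac.
have nth_w i k : k <= c - a ->
    nth (0, true) (take (c - a).+1 (drop i P)) k = nth (0, true) P (i + k).
  by move=> hk; rewrite nth_take ?nth_drop.
rewrite /conserved_in /block /plus_block /minus_block addn1.
by split=> -[i H]; exists i; move: H;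
  rewrite map_take map_drop perm_eq_window // !nth_w ?addn0 //; tauto.
Qed.

Lemma conserved_in_bound n P a c x : is_signed_perm n P ->
  conserved_in P a c -> a <= x <= c -> 1 <= x <= n.
Proof.
move=> PP [i [Pw _]] hx.
have : x \in iota a (c - a + 1) by rewrite mem_iota; lia.
rewrite -(perm_mem Pw) map_take map_drop => /mem_take/mem_drop.
by rewrite (perm_mem PP) mem_iota; lia.
Qed.

Definition flip (e : nat * bool) : nat * bool := (e.1, ~~ e.2).

(* The permutation read backwards with all signs flipped: it has the same
   conserved intervals, and swaps the two orientations of a block. *)
Definition rflip (P : seq (nat * bool)) : seq (nat * bool) := rev (map flip P).

Lemma rflipK : involutive rflip.
Proof.
move=> P; rewrite /rflip map_rev revK -map_comp -[RHS]map_id.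
by apply: eq_map => -[x b]; rewrite /flip /= negbK.
Qed.

Lemma map_fst_rflip P : map fst (rflip P) = rev (map fst P).
Proof. by rewrite /rflip map_rev -map_comp. Qed.

Lemma nth_rflip P k : k < size P ->
  nth (0, true) (rflip P) k = flip (nth (0, true) P (size P - k.+1)).
Proof.
move=> hk; rewrite /rflip nth_rev size_map //.
by rewrite (nth_map (0, true)) //; lia.
Qed.

Section Rflip.

Variables (P : seq (nat * bool)) (i a c : nat).
Hypothesis W : window (map fst P) i a c.

Let i' := size P - (i + (c - a)).+1.

Lemma window_rflip : window (map fst (rflip P)) i' a c.
Proof. by rewrite map_fst_rflip /i' -(size_map fst); apply: window_rev. Qed.

Lemma nth_rflip_first : nth (0, true) (rflip P) i' = flip (nth (0, true) P (i + (c - a))).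
Proof.
have := W.1; rewrite size_map => hs.
by rewrite nth_rflip /i'; [congr (flip (nth _ _ _)) |]; lia.
Qed.

Lemma nth_rflip_last : nth (0, true) (rflip P) (i' + (c - a)) = flip (nth (0, true) P i).
Proof.
have := W.1; rewrite size_map => hs.
by rewrite nth_rflip /i'; [congr (flip (nth _ _ _)) |]; lia.
Qed.

End Rflip.

Lemma plus_block_rflip P i a c :
  plus_block P i a c -> minus_block (rflip P) (size P - (i + (c - a)).+1) a c.
Proof.
case=> W [E1 E2]; rewrite /minus_block nth_rflip_first // nth_rflip_last // E1 E2.
by split=> //; apply: window_rflip.
Qed.

Lemma minus_block_rflip P i a c :
  minus_block P i a c -> plus_block (rflip P) (size P - (i + (c - a)).+1) a c.
Proof.
case=> W [E1 E2]; rewrite /plus_block nth_rflip_first // nth_rflip_last // E1 E2.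
by split=> //; apply: window_rflip.
Qed.

Lemma block_rflip P a c : block P a c -> block (rflip P) a c.
Proof.
case=> i [/plus_block_rflip | /minus_block_rflip] B; eexists; [right | left]; exact: B.
Qed.

Lemma block_of_rflip P a c : block (rflip P) a c -> block P a c.
Proof. by move/block_rflip; rewrite rflipK. Qed.

Lemma nth_map_fst (P : seq (nat * bool)) j : nth 0 (map fst P) j = (nth (0, true) P j).1.
Proof.
case: (ltnP j (size P)) => hj; first by rewrite (nth_map (0, true)).
by rewrite !nth_default ?size_map.
Qed.

Lemma plus_block_overlap (P : seq (nat * bool)) u v c d p : uniq (map fst P) ->
  u < c -> c <= v -> v < d -> plus_block P p u v -> block P c d ->
  [/\ block P u c, block P c v, block P v d & block P u d].
Proof.
move=> U uc cv vd [WI [Ep Er]] [q [[WJ [Eq Eqd]] | [WJ [Eq _]]]]; last first.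
  (* A reversed J would start with d > v at a position inside I. *)
  have := overlap_start_le U uc cv vd WI WJ; rewrite !nth_map_fst Ep Er Eq /=.
  by move=> /(_ erefl erefl); lia.
have sr : nth 0 (map fst P) (p + (v - u)) = v by rewrite nth_map_fst Er.
have sq : nth 0 (map fst P) q = c by rewrite nth_map_fst Eq.
have eq := overlap_shift U uc cv vd WI WJ sr sq.
have [W1 W2 W3 W4] := overlap_windows U uc cv vd WI WJ sr sq.
split.
- by exists p; left; split=> //; rewrite Ep -eq Eq.
- exists q; left; split=> //.
  by rewrite Eq (_ : q + (v - c) = p + (v - u)) ?Er //; lia.
- exists (p + (v - u)); left; split=> //.
  by rewrite Er (_ : p + (v - u) + (d - v) = q + (d - c)) ?Eqd //; lia.
- exists p; left; split=> //.
  by rewrite Ep (_ : p + (d - u) = q + (d - c)) ?Eqd //; lia.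
Qed.

Lemma block_overlap (P : seq (nat * bool)) u v c d : uniq (map fst P) ->
  u < c -> c <= v -> v < d -> block P u v -> block P c d ->
  [/\ block P u c, block P c v, block P v d & block P u d].
Proof.
move=> U uc cv vd [p [I | I]] J; first exact: plus_block_overlap I J.
have U' : uniq (map fst (rflip P)) by rewrite map_fst_rflip rev_uniq.
by case: (plus_block_overlap U' uc cv vd (minus_block_rflip I) (block_rflip J))
  => /block_of_rflip ? /block_of_rflip ? /block_of_rflip ? /block_of_rflip ?.
Qed.

Theorem lemma5 (n : nat) (Ps : seq sperm) (u v c d : nat) :
  2 <= n ->
  (forall P, P \in id_sperm n :: Ps -> is_signed_perm n P) ->
  (forall P, P \in id_sperm n :: Ps ->
     head (0, true) P = (1, true) /\ last (0, true) P = (n, true)) ->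
  conserved n (id_sperm n :: Ps) u v ->
  conserved n (id_sperm n :: Ps) c d ->
  u < c -> c <= v -> v < d ->
  conserved n (id_sperm n :: Ps) u c /\
  conserved n (id_sperm n :: Ps) c v /\
  conserved n (id_sperm n :: Ps) v d /\
  conserved n (id_sperm n :: Ps) u d.
Proof.
move=> _ Hperm _ [[e _] | [_ Huv]]; first lia.
move=> [[e _] | [_ Hcd]] uc cv vd; first lia.
have U P : P \in id_sperm n :: Ps -> uniq (map fst P).
  by move=> /Hperm PP; rewrite (perm_uniq PP) iota_uniq.
have B P : P \in id_sperm n :: Ps ->
    [/\ block P u c, block P c v, block P v d & block P u d].
  move=> HP; apply: block_overlap => //; first exact: U HP.
    by rewrite -conserved_in_block ?(U _ HP) //; [exact: Huv | lia].
  by rewrite -conserved_in_block ?(U _ HP) //; [exact: Hcd | lia].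
have C a b : a < b -> (forall P, P \in id_sperm n :: Ps -> block P a b) ->
    conserved n (id_sperm n :: Ps) a b.
  move=> ab hB; right; split=> // P HP.
  by rewrite conserved_in_block ?(U _ HP) //; [exact: hB | lia].
split; [|split; [|split]].
- by apply: C => // P /B[].
- case: (ltnP c v) => cv'; first by apply: C => // P /B[].
  left; split; first lia.
  have Hid : id_sperm n \in id_sperm n :: Ps by rewrite inE eqxx.
  have := conserved_in_bound (x := v) (Hperm _ Hid) (Huv _ Hid); lia.
- by apply: C => // P /B[].
- by apply: C; [lia | move=> P /B[]].
Qed.
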